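(* Assume the input distribution is non-degenerate in the following sense: for every $\mathbf{w}\neq \mathbf{0}$ with $\theta(\mathbf{w},\mathbf{w}_* )<\pi$ one has $\mathbf{A}_{\mathbf{w},\mathbf{w}_*}\succ 0$, and for every $\mathbf{w}\neq\mathbf{0}$ with $\theta(\mathbf{w},\mathbf{w}_* )>0$ one has $\mathbf{A}_{\mathbf{w},-\mathbf{w}_*}\succ 0$. Let the initialization $\mathbf{w}_0$ satisfy $\ell(\mathbf{w}_0)<\ell(\mathbf{0})$, and run gradient descent $\mathbf{w}_{t+1}=\mathbf{w}_t-\eta_t\nabla\ell(\mathbf{w}_t)$ with step sizes for which $\ell(\mathbf{w}_t)$ is non-increasing. If the iterates converge to a point $\bar{\mathbf{w}}$ with $\nabla \ell(\bar{\mathbf{w}})=\mathbf{0}$, then $\bar{\mathbf{w}}=\mathbf{w}_*$. (Equivalently: every $\mathbf{w}$ with $\ell(\mathbf{w})<\ell(\mathbf{0})$ and $\nabla\ell(\mathbf{w})=\mathbf{0}$ equals $\mathbf{w}_*$.)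
   Context: One-neuron setting. $\mathbf{Z}\in\mathbb{R}^p$ is a random vector with a continuous distribution; $\sigma(x)=\max(x,0)$ (ReLU); $\mathbf{w}_*\in\mathbb{R}^p\setminus\{\mathbf{0}\}$ is a fixed unknown teacher vector. The population loss is $\ell(\mathbf{w})=\frac12\mathbb{E}[(\sigma(\mathbf{w}^\top\mathbf{Z})-\sigma(\mathbf{w}_*^\top\mathbf{Z}))^2]$. Define $\mathbf{A}_{\mathbf{w},\mathbf{w}_*}=\mathbb{E}[\mathbf{Z}\mathbf{Z}^\top\mathbb{I}\{\mathbf{w}^\top\mathbf{Z}\ge0,\mathbf{w}_*^\top\mathbf{Z}\ge0\}]$ and $\mathbf{A}_{\mathbf{w},-\mathbf{w}_*}=\mathbb{E}[\mathbf{Z}\mathbf{Z}^\top\mathbb{I}\{\mathbf{w}^\top\mathbf{Z}\ge0,\mathbf{w}_*^\top\mathbf{Z}\le0\}]$. For $\mathbf{w}\ne \mathbf{0}$ the population gradient is $\nabla\ell(\mathbf{w})=\mathbf{A}_{\mathbf{w},\mathbf{w}_*}(\mathbf{w}-\mathbf{w}_* )+\mathbf{A}_{\mathbf{w},-\mathbf{w}_*}\mathbf{w}$. $\theta(\mathbf{u},\mathbf{v})\in[0,\pi]$ denotes the angle between vectors $\mathbf{u},\mathbf{v}$. *)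

From HB Require Import structures.
From mathcomp Require Import all_boot all_order all_algebra.
From mathcomp Require Import all_classical all_reals all_analysis.
Set Implicit Arguments. Unset Strict Implicit. Unset Printing Implicit Defensive.
Import Order.TTheory GRing.Theory Num.Theory.
Import numFieldNormedType.Exports.
Local Open Scope classical_set_scope.
Local Open Scope ring_scope.

Section OneNeuron.
Variables (d : measure_display) (T : measurableType d) (R : realType)
  (P : probability T R) (p : nat).

Definition dotp (u v : 'rV[R]_p) : R := (u *m v^T) 0 0.
Definition vnorm (u : 'rV[R]_p) : R := Num.sqrt (dotp u u).
Definition angle (u v : 'rV[R]_p) : R := acos (dotp u v / (vnorm u * vnorm v)).

Definition posdef (A : 'M[R]_p) : Prop :=
  forall x : 'rV[R]_p, x != 0 -> 0 < (x *m A *m x^T) 0 0.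

Definition relu (x : R) : R := Num.max x 0.

Variable Z : 'I_p -> T -> R.

Definition wZ (w : 'rV[R]_p) (o : T) : R := \sum_(i < p) w 0 i * Z i o.

Definition Ereal (X : T -> R) : R := fine ('E_P[X])%E.

Definition loss (ws w : 'rV[R]_p) : R :=
  2^-1 * Ereal (fun o => (relu (wZ w o) - relu (wZ ws o)) ^+ 2).

(* A_{w,v} = E[Z Z^T 1{w^T Z >= 0, v^T Z >= 0}];
   A_{w,w*} = Amat w ws and A_{w,-w*} = Amat w (- ws) *)
Definition Amat (w v : 'rV[R]_p) : 'M[R]_p :=
  \matrix_(i, j) Ereal (fun o => Z i o * Z j o *
     (if (0 <= wZ w o) && (0 <= wZ v o) then 1 else 0)).

(* population gradient (formula from the paper, valid for w <> 0) *)
Definition grad (ws w : 'rV[R]_p) : 'rV[R]_p :=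
  (Amat w ws *m (w - ws)^T)^T + (Amat w (- ws) *m w^T)^T.

Definition box (a b : 'I_p -> R) : set ('rV[R]_p) :=
  [set x | forall i, a i <= x 0 i <= b i].
Definition lebesgue_null (N : set ('rV[R]_p)) : Prop :=
  forall e : R, 0 < e -> exists a b : nat -> 'I_p -> R,
    (forall n i, a n i <= b n i) /\
    N `<=` \bigcup_n box (a n) (b n) /\
    (forall n, \sum_(k < n) \prod_(i < p) (b k i - a k i) < e).

Definition continuous_distribution : Prop :=
  forall N : set ('rV[R]_p), lebesgue_null N ->
    P.-negligible [set o | N (\row_i Z i o)].

End OneNeuron.

From HB Require Import structures.
From mathcomp Require Import all_boot all_order all_algebra.
From mathcomp Require Import all_classical all_reals all_analysis.
From mathcomp Require Import measurable_realfun ring lra.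
Set Implicit Arguments. Unset Strict Implicit. Unset Printing Implicit Defensive.
Import Order.TTheory GRing.Theory Num.Theory.
Import numFieldNormedType.Exports.
Local Open Scope classical_set_scope.
Local Open Scope ring_scope.

(* Let [u := wbar - ws] and test the stationarity equation against [u]:
   writing [A1 := A_{wbar,ws}] and [A2 := A_{wbar,-ws}],
     0 = u A1 u^T + wbar A2 wbar^T + (-ws) A2 wbar^T.
   Each term is the expectation of a nonnegative quantity (the last one is
   [(-ws.Z)(wbar.Z)] on the event where both factors are nonnegative), so all
   three vanish. If [u <> 0], then [u A1 u^T = 0] contradicts positivity of
   [A1] unless [angle wbar ws = pi], and then [wbar A2 wbar^T = 0] contradicts
   positivity of [A2]; for [wbar = 0] one uses [A_{0,ws} = A_{ws,ws}]. *)

Section Ereal_linear.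
Context (d : measure_display) (T : measurableType d) (R : realType)
  (P : probability T R).

Lemma Ereal_fin_num (X : T -> R) : X \in Lfun P 1 -> ('E_P[X] \is a fin_num)%E.
Proof. by move=> /Lfun1_integrable h; rewrite unlock; apply: integrable_fin_num. Qed.

Lemma ErealD (X Y : T -> R) : X \in Lfun P 1 -> Y \in Lfun P 1 ->
  Ereal P (fun o => X o + Y o) = Ereal P X + Ereal P Y.
Proof.
move=> hX hY; rewrite /Ereal.
have -> : (fun o => X o + Y o) = X \+ Y by [].
by rewrite expectationD// fineD// ?Ereal_fin_num.
Qed.

Lemma ErealZ (X : T -> R) k : X \in Lfun P 1 ->
  Ereal P (fun o => k * X o) = k * Ereal P X.
Proof.
move=> hX; rewrite /Ereal.
have -> : (fun o => k * X o) = k \o* X by apply/funext => o /=; rewrite mulrC.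
by rewrite expectationZl// fineM// Ereal_fin_num.
Qed.

Lemma Ereal_sum (I : Type) (s : seq I) (F : I -> T -> R) :
  (forall i, F i \in Lfun P 1) ->
  Ereal P (fun o => \sum_(i <- s) F i o) = \sum_(i <- s) Ereal P (F i).
Proof.
move=> hF; elim: s => [|a s IH].
  rewrite big_nil /Ereal.
  under eq_fun do rewrite big_nil.
  by rewrite expectation_cst.
rewrite big_cons -IH -ErealD//; first by under eq_fun do rewrite big_cons.
have -> : (fun o => \sum_(i <- s) F i o) = \sum_(i <- s) F i.
  by apply/funext => o; rewrite fct_sumE.
exact: rpred_sum.
Qed.

Lemma Ereal_ge0 (X : T -> R) : (forall o, 0 <= X o) -> 0 <= Ereal P X.
Proof. by move=> h; rewrite /Ereal fine_ge0// expectation_ge0. Qed.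

End Ereal_linear.

Section Vectors.
Context (R : realType) (p : nat).

Lemma dotp_self_gt0 (v : 'rV[R]_p) : v != 0 -> 0 < dotp v v.
Proof.
move=> v0; rewrite /dotp mxE.
have sq_ge0 (i : 'I_p) : true -> 0 <= v 0 i * v^T i 0.
  by move=> _; rewrite mxE -expr2 sqr_ge0.
rewrite lt_def sumr_ge0 // andbT; apply/eqP => s0.
move/eqP: v0; apply; apply/matrixP => a j; rewrite !mxE (ord1 a).
have := psumr_eq0P sq_ge0 s0 (i := j) isT.
by rewrite mxE => /eqP; rewrite mulf_eq0 orbb => /eqP.
Qed.

Lemma angle_self (v : 'rV[R]_p) : v != 0 -> angle v v = 0.
Proof.
move=> v0; have s0 := dotp_self_gt0 v0.
by rewrite /angle /vnorm -expr2 sqr_sqrtr ?ltW// divff ?gt_eqF// acos1.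
Qed.

End Vectors.

Section Amat.
Context (d : measure_display) (T : measurableType d) (R : realType)
  (P : probability T R) (p : nat) (Z : 'I_p -> {RV P >-> R}).
Hypothesis Z_L2 : forall i, (Z i : T -> R) \in Lfun P 2%E.
Let Zf i := (Z i : T -> R).

Definition halfspaces_ind (v1 v2 : 'rV[R]_p) (o : T) : R :=
  if (0 <= wZ Zf v1 o) && (0 <= wZ Zf v2 o) then 1 else 0.

Lemma halfspaces_ind_ge0 v1 v2 o : 0 <= halfspaces_ind v1 v2 o.
Proof. by rewrite /halfspaces_ind; case: ifP. Qed.

Lemma measurable_wZ v : measurable_fun setT (wZ Zf v).
Proof.
apply: measurable_sum => i.
by apply: measurable_funM => //; exact: measurable_funPT.
Qed.

Lemma measurable_halfspaces_ind v1 v2 : measurable_fun setT (halfspaces_ind v1 v2).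
Proof.
apply: measurable_fun_ifT => //.
by apply: measurable_and; apply: measurable_fun_ler => //; exact: measurable_wZ.
Qed.

Lemma Amat_entry_Lfun1 v1 v2 i j :
  (fun o => Zf i o * Zf j o * halfspaces_ind v1 v2 o) \in Lfun P 1.
Proof.
apply/Lfun1_integrable.
move/Lfun1_integrable: (Lfun2_mul_Lfun1 (Z_L2 i) (Z_L2 j)) => ZZ_int.
apply: (le_integrable _ _ _ ZZ_int) => //.
  apply/measurable_EFinP; apply: measurable_funM.
    by apply: measurable_funM; exact: measurable_funPT.
  exact: measurable_halfspaces_ind.
move=> o _ /=; rewrite lee_fin /halfspaces_ind.
by case: ifP => _; rewrite ?mulr1 // mulr0 normr0.
Qed.

Lemma Amat_bilinear (x y v1 v2 : 'rV[R]_p) :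
  (x *m Amat P Zf v1 v2 *m y^T) 0 0 =
  Ereal P (fun o => wZ Zf x o * wZ Zf y o * halfspaces_ind v1 v2 o).
Proof.
set F := fun i j o => Zf i o * Zf j o * halfspaces_ind v1 v2 o.
have -> : (fun o => wZ Zf x o * wZ Zf y o * halfspaces_ind v1 v2 o) =
    (fun o => \sum_(j < p) \sum_(i < p) x 0 i * y 0 j * F i j o).
  apply/funext => o; rewrite /wZ exchange_big /= -mulrA mulr_suml.
  apply: eq_bigr => i _; rewrite mulr_suml mulr_sumr.
  by apply: eq_bigr => j _; rewrite /F; ring.
have FZ_Lfun1 i j k : (fun o => k * F i j o) \in Lfun P 1.
  exact: (rpredZ k (Amat_entry_Lfun1 v1 v2 i j)).
rewrite Ereal_sum; last first.
  move=> j; have -> : (fun o => \sum_(i < p) x 0 i * y 0 j * F i j o) =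
      \sum_(i < p) (fun o => x 0 i * y 0 j * F i j o).
    by apply/funext => o; rewrite fct_sumE.
  by apply: rpred_sum => i _; exact: FZ_Lfun1.
rewrite mxE; apply: eq_bigr => j _.
rewrite Ereal_sum // !mxE big_distrl /=; apply: eq_bigr => i _.
by rewrite ErealZ ?Amat_entry_Lfun1 // /Amat mxE; ring.
Qed.

Lemma Amat_quad_ge0 (x v1 v2 : 'rV[R]_p) : 0 <= (x *m Amat P Zf v1 v2 *m x^T) 0 0.
Proof.
rewrite Amat_bilinear; apply: Ereal_ge0 => o.
by rewrite -expr2 mulr_ge0 ?sqr_ge0 ?halfspaces_ind_ge0.
Qed.

Lemma Amat_cross_ge0 (v1 v2 : 'rV[R]_p) : 0 <= (v2 *m Amat P Zf v1 v2 *m v1^T) 0 0.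
Proof.
rewrite Amat_bilinear; apply: Ereal_ge0 => o.
rewrite /halfspaces_ind; case: ifP => [/andP[h1 h2]|_]; last by rewrite mulr0.
by rewrite mulr1 mulr_ge0.
Qed.

End Amat.

Lemma Amat0l (d : measure_display) (T : measurableType d) (R : realType)
  (P : probability T R) (p : nat) (Z : 'I_p -> T -> R) (v : 'rV[R]_p) :
  Amat P Z 0 v = Amat P Z v v.
Proof.
apply/matrixP => i j; rewrite !mxE; congr Ereal; apply/funext => o.
by rewrite /wZ big1 ?lexx ?andbb // => k _; rewrite mxE mul0r.
Qed.

Lemma grad_test (d : measure_display) (T : measurableType d) (R : realType)
  (P : probability T R) (p : nat) (Z : 'I_p -> T -> R) (ws w : 'rV[R]_p) :
  ((w - ws) *m (grad P Z ws w)^T) 0 0 =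
    ((w - ws) *m Amat P Z w ws *m (w - ws)^T) 0 0
    + ((w *m Amat P Z w (- ws) *m w^T) 0 0
       + ((- ws) *m Amat P Z w (- ws) *m w^T) 0 0).
Proof.
rewrite /grad linearD /= !trmxK mulmxDr !mulmxA.
by rewrite [in X in _ + X]mulmxDl mulmxDl mxE [X in _ + X]mxE.
Qed.

Lemma stationary_point_eq_teacher (d : measure_display) (T : measurableType d)
  (R : realType) (P : probability T R) (p : nat) (Z : 'I_p -> {RV P >-> R})
  (ws wb : 'rV[R]_p) :
  (forall i, (Z i : T -> R) \in Lfun P 2%E) ->
  ws != 0 ->
  (forall v, v != 0 -> angle v ws < pi -> posdef (Amat P (fun i => Z i : T -> R) v ws)) ->
  (forall v, v != 0 -> 0 < angle v ws ->
     posdef (Amat P (fun i => Z i : T -> R) v (- ws))) ->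
  grad P (fun i => Z i : T -> R) ws wb = 0 -> wb = ws.
Proof.
move=> Z_L2 ws0 A1_pd A2_pd grad0.
set Zf := fun i => Z i : T -> R.
apply/eqP; rewrite -subr_eq0; apply/negPn/negP => u0.
set u := wb - ws in u0.
have := grad_test P Zf ws wb; rewrite grad0 trmx0 mulmx0 mxE -/u.
have := Amat_quad_ge0 Z_L2 u wb ws.
have := Amat_quad_ge0 Z_L2 wb wb (- ws).
have := Amat_cross_ge0 Z_L2 wb (- ws).
rewrite -/Zf => q3 q2 q1 sum0.
have A1_u : (u *m Amat P Zf wb ws *m u^T) 0 0 = 0 by lra.
have A2_wb : (wb *m Amat P Zf wb (- ws) *m wb^T) 0 0 = 0 by lra.
have [wb0|wb_neq0] := eqVneq wb 0.
  move: A1_u; rewrite wb0 Amat0l.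
  by have := A1_pd ws ws0; rewrite angle_self // pi_gt0 => /(_ isT u u0) /gt_eqF/eqP.
have [lt_pi|ge_pi] := ltrP (angle wb ws) pi.
  by move: A1_u; have := A1_pd wb wb_neq0 lt_pi u u0 => /gt_eqF/eqP.
have angle_gt0 : 0 < angle wb ws := lt_le_trans (pi_gt0 R) ge_pi.
by move: A2_wb; have := A2_pd wb wb_neq0 angle_gt0 wb wb_neq0 => /gt_eqF/eqP.
Qed.

Theorem theorem1 (d : measure_display) (T : measurableType d) (R : realType)
  (P : probability T R) (p : nat) (Z : 'I_p -> {RV P >-> R})
  (ws : 'rV[R]_p) (w : nat -> 'rV[R]_p) (eta : nat -> R) (wbar : 'rV[R]_p) :
  (forall i, (Z i : T -> R) \in Lfun P 2%E) ->
  continuous_distribution P (fun i => (Z i : T -> R)) ->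
  ws != 0 ->
  (forall v : 'rV[R]_p, v != 0 -> angle v ws < pi ->
     posdef (Amat P (fun i => (Z i : T -> R)) v ws)) ->
  (forall v : 'rV[R]_p, v != 0 -> 0 < angle v ws ->
     posdef (Amat P (fun i => (Z i : T -> R)) v (- ws))) ->
  loss P (fun i => (Z i : T -> R)) ws (w 0%N) < loss P (fun i => (Z i : T -> R)) ws 0 ->
  (forall t, w t.+1 = w t - eta t *: grad P (fun i => (Z i : T -> R)) ws (w t)) ->
  (forall t, loss P (fun i => (Z i : T -> R)) ws (w t.+1)
             <= loss P (fun i => (Z i : T -> R)) ws (w t)) ->
  w @ \oo --> wbar ->
  grad P (fun i => (Z i : T -> R)) ws wbar = 0 ->
  wbar = ws.
Proof.
move=> Z_L2 _ ws0 A1_pd A2_pd _ _ _ _ grad0.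
exact: stationary_point_eq_teacher Z_L2 ws0 A1_pd A2_pd grad0.
Qed.
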